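(* Consider the following algorithm for $1\,||\,\sum w_jU_j$: let $d^{(1)}<\cdots<d^{(d_{\#})}$ be the distinct due dates and $J_i=\{j : d_j=d^{(i)}\}$; compute the solution vector $A_i$ of each $J_i$ (viewed as an instance on its own); set $A=A_1$; for $i=2,\ldots,d_{\#}$ set $A=A\oplus A_i$; return $\sum_j w_j - A[d_{\max}]$. This algorithm correctly returns the minimum total weight of tardy jobs.
   Context: In $1\,||\,\sum w_jU_j$ we are given $n$ jobs, job $j$ with processing time $p_j\in\mathbb{N}$, weight $w_j\in\mathbb{N}$, due date $d_j\in\mathbb{N}$; jobs are scheduled non-preemptively on one machine in some order, job $j$ is early if its completion time (sum of processing times of jobs up to and including $j$) is at most $d_j$ and tardy otherwise; the goal is the minimum total weight of tardy jobs. $d_{\max}=\max_j d_j$, $d_{\#}$ is the number of distinct due dates. A subset $S$ of jobs is called a set of early jobs if there is a schedule in which all jobs of $S$ are early. The solution vector of an instance $J$ (with maximum due date $D$) is the integer vector $(A[k])_{k=0}^{D}$ where $A[k]$ is the maximum total weight of a set of early jobs of $J$ with total processing time at most $k$. For integer vectors $A=(A[k])_{k=0}^m$, $B=(B[\ell])_{\ell=0}^{n'}$ with $m\le n'$, the $(\max,+)$-convolution $A\oplus B$ is the vector $(C[\ell])_{\ell=0}^{n'}$ with $C[\ell]=\max_{0\le k\le \ell}(A[k]+B[\ell-k])$ (terms with $k>m$ omitted). *)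

From mathcomp Require Import all_boot all_order all_fingroup.
Set Implicit Arguments. Unset Strict Implicit. Unset Printing Implicit Defensive.

(* A schedule (of a job set J) is an ordering of the jobs, encoded by a
   permutation sigma of 'I_n: job k precedes job j iff sigma k < sigma j. *)

Definition completion (n : nat) (p : 'I_n -> nat) (J : {set 'I_n})
  (sigma : {perm 'I_n}) (j : 'I_n) : nat :=
  \sum_(k in J | sigma k <= sigma j) p k.

Definition early_set (n : nat) (p d : 'I_n -> nat) (J S : {set 'I_n}) : bool :=
  (S \subset J) &&
  [exists sigma : {perm 'I_n}, [forall j in S, completion p J sigma j <= d j]].

Definition dmax_of (n : nat) (d : 'I_n -> nat) (J : {set 'I_n}) : nat :=
  \max_(j in J) d j.

Definition sol_vec (n : nat) (p w d : 'I_n -> nat) (J : {set 'I_n}) : seq nat :=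
  mkseq (fun k => \max_(S : {set 'I_n} | early_set p d J S && (\sum_(j in S) p j <= k))
                    \sum_(j in S) w j)
        (dmax_of d J).+1.

(* (max,+)-convolution; A has indices 0..size A - 1, B has indices 0..size B - 1,
   intended for size A <= size B; result has the length of B. *)
Definition maxplus_conv (A B : seq nat) : seq nat :=
  mkseq (fun l => \max_(k < l.+1 | k < size A) (nth 0 A k + nth 0 B (l - k)))
        (size B).

Definition distinct_dues (n : nat) (d : 'I_n -> nat) : seq nat :=
  sort leq (undup [seq d j | j <- enum 'I_n]).

Definition jobs_with_due (n : nat) (d : 'I_n -> nat) (dd : nat) : {set 'I_n} :=
  [set j | d j == dd].

Definition algo (n : nat) (p w d : 'I_n -> nat) : nat :=
  let dds := distinct_dues d in
  let Ai := fun dd => sol_vec p w d (jobs_with_due d dd) in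
  let A := foldl (fun A dd => maxplus_conv A (Ai dd)) (Ai (head 0 dds)) (behead dds) in
  \sum_(j : 'I_n) w j - nth 0 A (\max_(j : 'I_n) d j).

Definition tardy_weight (n : nat) (p w d : 'I_n -> nat) (sigma : {perm 'I_n}) : nat :=
  \sum_(j : 'I_n | d j < completion p [set: 'I_n] sigma j) w j.

From mathcomp Require Import all_boot all_order all_fingroup.
Set Implicit Arguments. Unset Strict Implicit. Unset Printing Implicit Defensive.

(* A set S of jobs can be scheduled with all its jobs early iff it passes the
   EDD test: for every bound D, the jobs of S due by D take total time at most
   D.  Hence, when every job of J1 is due by e and every job of J2 is due at
   e' > e, the early sets of J1 :|: J2 of total time at most l <= e' are the
   unions of an early set of J1, of some total time k <= e, with an early set of
   J2 of total time at most l - k.  So the solution vector of the jobs due by e'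
   is the (max,+)-convolution of those of the jobs due by e and of the jobs due
   at e', and by induction over the distinct due dates the algorithm computes
   the solution vector of the whole instance, whose last entry is the maximum
   weight of a set of early jobs. *)

Lemma leq_sum_sub (I : finType) (P Q : pred I) (F : I -> nat) :
  (forall i, P i -> Q i) -> \sum_(i | P i) F i <= \sum_(i | Q i) F i.
Proof. exact: (@sub_le_big _ addn leq leqnn (fun x y => leq_addr y x)). Qed.

Lemma sum_setU_disjoint (I : finType) (A B : {set I}) (F : I -> nat) :
  [disjoint B & A] -> \sum_(i in A :|: B) F i = \sum_(i in A) F i + \sum_(i in B) F i.
Proof. by move=> dBA; rewrite (big_setID A) setUK setDUl setDv set0U (setDidPl dBA). Qed.

Section EarliestDueDate.

Variables (n : nat) (p d : 'I_n -> nat).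
Implicit Types (S T J : {set 'I_n}) (sigma : {perm 'I_n}).

Definition edd_feasible S : bool :=
  [forall j in S, \sum_(k in S | d k <= d j) p k <= d j].

Lemma edd_feasibleP S :
  reflect (forall D, \sum_(k in S | d k <= D) p k <= D) (edd_feasible S).
Proof.
apply: (iffP forall_inP) => [feasS D | feasS j _]; last exact: feasS.
case: (pickP [pred k | (k \in S) && (d k <= D)]) => [k0 k0SD | noSD]; last first.
  by rewrite big_pred0.
case: (arg_maxnP d k0SD) => j /andP[jS jD] jmax.
apply: leq_trans (leq_trans (feasS j jS) jD).
by apply: leq_sum_sub => k kSD; rewrite (andP kSD).1; apply: jmax.
Qed.

Lemma edd_feasibleS S T : T \subset S -> edd_feasible S -> edd_feasible T.
Proof.
move=> TS /edd_feasibleP feasS; apply/edd_feasibleP => D.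
apply: leq_trans (feasS D); apply: leq_sum_sub => k /andP[kT ->].
by rewrite (subsetP TS).
Qed.

Lemma edd_feasible_sum S D :
  edd_feasible S -> {in S, forall j, d j <= D} -> \sum_(j in S) p j <= D.
Proof.
move=> /edd_feasibleP feasS dS; apply: leq_trans (feasS D).
by apply: leq_sum_sub => k kS; rewrite kS dS.
Qed.

Lemma edd_feasible_setU S T e :
    edd_feasible S -> {in T, forall j, d j = e} ->
    \sum_(j in S :|: T) p j <= e ->
  edd_feasible (S :|: T).
Proof.
move=> /edd_feasibleP feasS dT sumST; apply/edd_feasibleP => D.
have [De | eD] := ltnP D e.
  apply: leq_trans (feasS D); apply: leq_sum_sub => k /andP[].
  by rewrite inE => /orP[-> -> // | /dT ->]; rewrite leqNgt De.
apply: leq_trans eD; apply: leq_trans sumST.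
by apply: leq_sum_sub => k /andP[].
Qed.

(* The last job of S due by d j in the order sigma completes after all of
   them. *)
Lemma early_edd_feasible J S sigma :
    S \subset J -> {in S, forall j, completion p J sigma j <= d j} ->
  edd_feasible S.
Proof.
move=> SJ early; apply/forall_inP => j jS.
have jSj : [pred k | (k \in S) && (d k <= d j)] j by rewrite /= jS leqnn.
case: (arg_maxnP (fun k => nat_of_ord (sigma k)) jSj) => k /andP[kS kj] kmax.
apply: leq_trans kj; apply: leq_trans (early k kS).
apply: leq_sum_sub => i iSj; rewrite (subsetP SJ) ?(andP iSj).1 //=.
exact: kmax.
Qed.

(* Schedule the jobs of S first, by nondecreasing due date, and the other
   jobs afterwards. *)
Lemma edd_schedule S :
  edd_feasible S ->
  exists sigma, forall J, {in S, forall j, completion p J sigma j <= d j}.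
Proof.
move=> /forall_inP feasS.
pose key k := if k \in S then d k else (\max_i d i).+1.
pose before := relpre key leq.
have before_tr : transitive before by move=> ? ? ?; apply: leq_trans.
have before_total : total before by move=> ? ?; apply: leq_total.
pose order := sort before (enum 'I_n).
have sorted_order : sorted before order := sort_sorted before_total _.
have mem_order k : k \in order by rewrite mem_sort mem_enum.
have rank_lt k : index k order < n.
  by rewrite -[n in _ < n](size_enum_ord n) -(size_sort before) index_mem.
pose rank k := Ordinal (rank_lt k).
have rank_inj : injective rank.
  by move=> a b /(congr1 val) /=; apply: index_inj (mem_order a) (mem_order b).
exists (perm rank_inj) => J j jS.
apply: leq_trans (feasS j jS); apply: leq_sum_sub => k /andP[_].
rewrite !permE /= => kj.
have : key k <= key j.
  exact: (sorted_leq_index before_tr (fun x => leqnn (key x)) sorted_order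
           _ _ (mem_order k) (mem_order j) kj).
rewrite /key jS; case: (k \in S) => //.
by rewrite ltnNge leq_bigmax.
Qed.

Lemma early_setE J S : early_set p d J S = (S \subset J) && edd_feasible S.
Proof.
rewrite /early_set; case: (S \subset J) / boolP => //= SJ.
apply/existsP/idP => [[sigma /forall_inP early] | /edd_schedule[sigma early]].
  exact: early_edd_feasible early.
by exists sigma; apply/forall_inP; apply: early.
Qed.

End EarliestDueDate.

Section SolutionVector.

Variables (n : nat) (p w d : 'I_n -> nat).
Implicit Types (S J : {set 'I_n}) (sigma : {perm 'I_n}).

Definition early_weight J l : nat :=
  \max_(S : {set 'I_n} | early_set p d J S && (\sum_(j in S) p j <= l))
    \sum_(j in S) w j.

Lemma early_weight_witness J l :
  exists2 S, early_set p d J S && (\sum_(j in S) p j <= l) &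
             early_weight J l = \sum_(j in S) w j.
Proof.
have early0 : early_set p d J set0 && (\sum_(j in set0) p j <= l).
  by rewrite early_setE sub0set big_set0 andbT; apply/forall_inP => j; rewrite inE.
by exists [arg max_(S > set0 | early_set p d J S && (\sum_(j in S) p j <= l))
             \sum_(j in S) w j]; [case: arg_maxnP | apply: bigmax_eq_arg].
Qed.

Lemma size_sol_vec J : size (sol_vec p w d J) = (dmax_of d J).+1.
Proof. exact: size_mkseq. Qed.

Lemma nth_sol_vec J l :
  l <= dmax_of d J -> nth 0 (sol_vec p w d J) l = early_weight J l.
Proof. by move=> ?; rewrite nth_mkseq. Qed.

Lemma early_weight_setU_le J1 J2 e l :
    {in J1, forall j, d j <= e} ->
  early_weight (J1 :|: J2) l <=
    \max_(k < l.+1 | k < e.+1) (early_weight J1 k + early_weight J2 (l - k)).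
Proof.
move=> dJ1; apply/bigmax_leqP => S /andP[]; rewrite early_setE.
move=> /andP[SJ feasS] sumS.
have S1J1 : S :&: J1 \subset J1 := subsetIr S J1.
have S2J2 : S :\: J1 \subset J2.
  apply/subsetP => j; rewrite inE => /andP[jJ1 jS].
  by move: (subsetP SJ j jS); rewrite inE (negbTE jJ1).
have feas1 := edd_feasibleS (subsetIl S J1) feasS.
have feas2 := edd_feasibleS (subsetDl S J1) feasS.
have sum1 : \sum_(j in S :&: J1) p j <= e.
  by apply: edd_feasible_sum feas1 _ => j /(subsetP S1J1); apply: dJ1.
rewrite (big_setID J1) /= in sumS.
have k_lt : \sum_(j in S :&: J1) p j < l.+1.
  by rewrite ltnS (leq_trans _ sumS) ?leq_addr.
rewrite (big_setID J1) /=.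
apply: leq_trans (leq_bigmax_cond (Ordinal k_lt) _); last by rewrite /= ltnS.
apply: leq_add; apply: leq_bigmax_cond; rewrite early_setE.
  by rewrite S1J1 feas1 leqnn.
by rewrite S2J2 feas2 leq_subRL ?(leq_trans _ sumS) ?leq_addr.
Qed.

Lemma early_weight_setU_ge J1 J2 e e' k l :
    {in J1, forall j, d j <= e} -> {in J2, forall j, d j = e'} ->
    e < e' -> k <= l -> l <= e' ->
  early_weight J1 k + early_weight J2 (l - k) <= early_weight (J1 :|: J2) l.
Proof.
move=> dJ1 dJ2 ee' kl le'.
have [S1 /andP[early1 sum1] ->] := early_weight_witness J1 k.
have [S2 /andP[early2 sum2] ->] := early_weight_witness J2 (l - k).
move: early1 early2; rewrite !early_setE => /andP[S1J1 feas1] /andP[S2J2 _].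
have disj : [disjoint S2 & S1].
  rewrite disjoint_subset; apply/subsetP => j /(subsetP S2J2) /dJ2 dj.
  by apply/negP => /(subsetP S1J1) /dJ1; rewrite dj leqNgt ee'.
have sumU : \sum_(j in S1 :|: S2) p j <= l.
  by rewrite sum_setU_disjoint // -(subnKC kl) leq_add.
rewrite -sum_setU_disjoint //; apply: leq_bigmax_cond.
rewrite early_setE setUSS // sumU andbT /=.
apply: edd_feasible_setU feas1 _ (leq_trans sumU le') => j /(subsetP S2J2).
exact: dJ2.
Qed.

Lemma early_weight_setU J1 J2 e e' l :
    {in J1, forall j, d j <= e} -> {in J2, forall j, d j = e'} ->
    e < e' -> l <= e' ->
  early_weight (J1 :|: J2) l =
    \max_(k < l.+1 | k < e.+1) (early_weight J1 k + early_weight J2 (l - k)).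
Proof.
move=> dJ1 dJ2 ee' le'; apply/eqP; rewrite eqn_leq early_weight_setU_le //=.
apply/bigmax_leqP => k _; apply: early_weight_setU_ge dJ1 dJ2 ee' _ le'.
by rewrite -ltnS.
Qed.

Definition jobs_upto (e : nat) : {set 'I_n} := [set j | d j <= e].

Lemma dmax_of_eq J e :
  {in J, forall j, d j <= e} -> (exists2 j, j \in J & d j = e) -> dmax_of d J = e.
Proof.
move=> dJ [j jJ dj]; apply/eqP; rewrite eqn_leq; apply/andP; split.
  exact/bigmax_leqP.
by rewrite -dj; apply: leq_bigmax_cond.
Qed.

Lemma dmax_of_jobs_upto (e : nat) :
  e \in codom d -> dmax_of d (jobs_upto e) = e.
Proof.
case/codomP=> j ->; apply: dmax_of_eq => [i|]; first by rewrite inE.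
by exists j; rewrite ?inE.
Qed.

Lemma dmax_of_jobs_with_due (e : nat) :
  e \in codom d -> dmax_of d (jobs_with_due d e) = e.
Proof.
case/codomP=> j ->; apply: dmax_of_eq => [i|]; first by rewrite inE => /eqP ->.
by exists j; rewrite ?inE.
Qed.

Lemma jobs_upto_next e e' :
    e < e' -> (forall j, e < d j -> e' <= d j) ->
  jobs_upto e' = jobs_upto e :|: jobs_with_due d e'.
Proof.
move=> ee' gap; apply/setP => j; rewrite !inE.
have [dje | edj] := leqP (d j) e; first by rewrite (leq_trans dje (ltnW ee')).
by rewrite /= eqn_leq gap ?andbT.
Qed.

Lemma sol_vec_upto_next (e e' : nat) :
    e \in codom d -> e' \in codom d -> e < e' ->
    (forall j, e < d j -> e' <= d j) ->
  maxplus_conv (sol_vec p w d (jobs_upto e)) (sol_vec p w d (jobs_with_due d e')) =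
    sol_vec p w d (jobs_upto e').
Proof.
move=> de de' ee' gap; have dmax := (dmax_of_jobs_upto, dmax_of_jobs_with_due).
apply: (@eq_from_nth _ 0) => [|l]; first by rewrite size_mkseq !size_sol_vec !dmax.
rewrite size_mkseq size_sol_vec dmax // ltnS => le'.
rewrite nth_mkseq ?size_sol_vec ?dmax // nth_sol_vec ?dmax //.
rewrite (jobs_upto_next ee' gap) (early_weight_setU (e := e) (e' := e')) //; last first.
- by move=> j; rewrite inE => /eqP.
- by move=> j; rewrite inE.
apply: eq_bigr => k ke.
rewrite !nth_sol_vec ?dmax //.
exact: leq_trans (leq_subr _ _) le'.
Qed.

Lemma foldl_sol_vec (e : nat) s :
    e \in codom d -> path ltn e s -> {subset s <= codom d} ->
    (forall j, e < d j -> d j \in s) ->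
  foldl (fun A dd => maxplus_conv A (sol_vec p w d (jobs_with_due d dd)))
        (sol_vec p w d (jobs_upto e)) s = sol_vec p w d [set: 'I_n].
Proof.
elim: s e => [|e' s IHs] e de /=.
  move=> _ _ later; congr sol_vec; apply/setP => j; rewrite !inE leqNgt.
  by apply/negP => /later.
move=> /andP[ee' path_s] sub later.
have /allP s_gt := order_path_min ltn_trans path_s.
have de' : e' \in codom d by apply: sub; rewrite mem_head.
rewrite sol_vec_upto_next //; last first.
  move=> j /later; rewrite inE => /predU1P[-> // | /s_gt]; exact: ltnW.
apply: IHs => // [x xs | j e'j]; first by apply: sub; rewrite inE xs orbT.
have := later j (ltn_trans ee' e'j); rewrite inE => /predU1P[dj | //].
by rewrite dj ltnn in e'j.
Qed.

Definition on_time sigma : {set 'I_n} :=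
  [set j | completion p [set: 'I_n] sigma j <= d j].

Lemma tardy_weightE sigma :
  tardy_weight p w d sigma = \sum_j w j - \sum_(j in on_time sigma) w j.
Proof.
rewrite (bigID [in on_time sigma]) /= addKn; apply: eq_bigl => j.
by rewrite inE ltnNge.
Qed.

Lemma on_time_weight_le sigma :
  \sum_(j in on_time sigma) w j <= early_weight [set: 'I_n] (\max_j d j).
Proof.
have feas : edd_feasible p d (on_time sigma).
  by apply: (early_edd_feasible (sigma := sigma) (subsetT _)) => j; rewrite inE.
apply: leq_bigmax_cond; rewrite early_setE subsetT feas /=.
by apply: edd_feasible_sum feas _ => j _; apply: leq_bigmax.
Qed.

End SolutionVector.

Lemma mem_distinct_dues n (d : 'I_n -> nat) x :
  (x \in distinct_dues d) = (x \in codom d).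
Proof. by rewrite mem_sort mem_undup. Qed.

Lemma sorted_distinct_dues n (d : 'I_n -> nat) : sorted ltn (distinct_dues d).
Proof.
by rewrite ltn_sorted_uniq_leq sort_uniq undup_uniq (sort_sorted leq_total).
Qed.

Lemma algoE n (p w d : 'I_n -> nat) :
  0 < n -> algo p w d = \sum_j w j - early_weight p w d [set: 'I_n] (\max_j d j).
Proof.
move=> n_gt0; rewrite /algo.
have := sorted_distinct_dues d; have := @mem_distinct_dues n d.
case: (distinct_dues d) => [|e s] mem_dds.
  by have := mem_dds (d (Ordinal n_gt0)); rewrite codom_f.
move=> /= path_s; have /allP s_gt := order_path_min ltn_trans path_s.
have due_dds j : d j \in e :: s by rewrite mem_dds codom_f.
have e_min j : e <= d j.
  by have := due_dds j; rewrite inE => /predU1P[-> // | /s_gt /ltnW].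
have -> : jobs_with_due d e = jobs_upto d e.
  by apply/setP => j; rewrite !inE eqn_leq e_min andbT.
rewrite foldl_sol_vec ?nth_sol_vec //.
- by apply/bigmax_leqP => j _; apply: leq_bigmax_cond.
- by rewrite -mem_dds mem_head.
- by move=> x xs; rewrite -mem_dds inE xs orbT.
move=> j ej; have := due_dds j; rewrite inE => /predU1P[dj | //].
by rewrite dj ltnn in ej.
Qed.

Theorem lemma11 (n : nat) (p w d : 'I_n -> nat) :
  0 < n ->
  (exists sigma : {perm 'I_n}, tardy_weight p w d sigma = algo p w d) /\
  (forall sigma : {perm 'I_n}, algo p w d <= tardy_weight p w d sigma).
Proof.
move=> n_gt0; rewrite algoE //.
have [S /andP[+ _] wS] := early_weight_witness p w d [set: 'I_n] (\max_j d j).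
rewrite early_setE => /andP[_ /edd_schedule[sigma on_timeS]].
split; last by move=> tau; rewrite tardy_weightE leq_sub2l ?on_time_weight_le.
exists sigma; rewrite tardy_weightE; congr (_ - _); apply/eqP.
rewrite eqn_leq on_time_weight_le wS /=.
by apply: leq_sum_sub => j jS; rewrite inE on_timeS.
Qed.
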